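(* Let $k\geq0$, $q\geq1$, $m\ge1$ and $\gamma=(\gamma_1,\ldots,\gamma_m)\in\mathbb{Z}^m$ with $\gamma_1\ge 2$ and $2\le\gamma_{i+1}\le\gamma_i+1$ for all $1\le i<m$. Then $F^{1234}(k,q,\gamma)=F^{2143}(k,q,\gamma)$.
   Context: For $\pi\in\{1234,2143\}$ define successor functions on integer triples. $\mathrm{suc}^{2143}(x,y,z)=\emptyset$ if $z\le0$ and for $z\ge1$, $\mathrm{suc}^{2143}(x,y,z)=\{(2,y{+}1,z),\ldots,(x{+}1,y{+}1,z)\}\cup\{(x,x{+}1,z),\ldots,(x,y,z)\}\cup\mathrm{suc}^{2143}(x,x,z{-}1)$. $\mathrm{suc}^{1234}(x,y,1)=\{(2,y{+}1,1),\ldots,(x{+}1,y{+}1,1)\}\cup\{(x,x{+}1,1),\ldots,(x,y,1)\}$ and for $z\ge2$, $\mathrm{suc}^{1234}(x,y,z)=\{(2,y{+}1,z),\ldots,(x{+}1,y{+}1,z)\}\cup\mathrm{suc}^{1234}(x,y,z{-}1)$ (sets of the form $\{(x,x{+}1,\cdot),\ldots,(x,y,\cdot)\}$ are empty if $y\le x$). A path in $\mathcal{P}^{\pi}$ is a finite sequence $P=(v_1,\ldots,v_r)$, $r\ge1$, of points of $\mathbb{Z}^3$ with $v_1=(x,y,z)$, $2\le x\le y$, $z\ge1$, and $v_{i+1}\in\mathrm{suc}^{\pi}(v_i)$; its length is $\ell(P)=r$. For $P\in\mathcal{P}^{2143}$, an edge from $(x_1,y_1,z_1)$ to $(x_2,y_2,z_2)$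 is recorded if either $z_1=z_2$ and $y_2=y_1+1$, or $z_1>z_2$. For $P\in\mathcal{P}^{1234}$, such an edge is recorded if $y_2=y_1+1$. The signature of $P$ is the tuple of the $x$-coordinate of $v_1$ followed by the $x$-coordinates of the endpoints of the recorded edges, in order. For $k\ge0$, $q\ge1$, $\gamma\in\mathbb{Z}^m$, $m\ge1$, $\mathcal{P}^{\pi}_{k,q,\gamma}$ is the set of paths in $\mathcal{P}^{\pi}$ starting at $(\gamma_1,\gamma_1+k,q)$ with signature $\gamma$, and $F^{\pi}(k,q,\gamma)=\sum_{P\in\mathcal{P}^{\pi}_{k,q,\gamma}}t^{\ell(P)-m}$, a formal power series in $t$. *)

From Stdlib Require Import ZArith List.
Import ListNotations.
Open Scope Z_scope.

Definition pt : Type := (Z * Z * Z)%type.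

Definition pt_eq_dec : forall u v : pt, {u = v} + {u <> v}.
Proof. decide equality; try apply Z.eq_dec; decide equality; apply Z.eq_dec. Defined.

(* integers a, a+1, ..., b  (empty if b < a) *)
Definition zrange (a b : Z) : list Z :=
  map (fun i => a + Z.of_nat i) (seq 0 (Z.to_nat (b - a + 1))).

Definition row (x y z : Z) : list pt := map (fun a => (a, y + 1, z)) (zrange 2 (x + 1)).
Definition col (x y z : Z) : list pt := map (fun b => (x, b, z)) (zrange (x + 1) y).

(* suc^{2143}(x,y,n) for n : nat viewed as z = n *)
Fixpoint suc2143n (x y : Z) (n : nat) : list pt :=
  match n with
  | O => []
  | S n' => row x y (Z.of_nat n) ++ col x y (Z.of_nat n) ++ suc2143n x x n'
  end.

Definition suc2143 (v : pt) : list pt :=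
  let '(x, y, z) := v in
  if z <=? 0 then [] else suc2143n x y (Z.to_nat z).

Fixpoint suc1234n (x y : Z) (n : nat) : list pt :=
  match n with
  | O => []
  | S O => row x y 1 ++ col x y 1
  | S n' => row x y (Z.of_nat n) ++ suc1234n x y n'
  end.

(* only defined for z >= 1 in the paper; z <= 0 never occurs on paths *)
Definition suc1234 (v : pt) : list pt :=
  let '(x, y, z) := v in
  if z <=? 0 then [] else suc1234n x y (Z.to_nat z).

Inductive perm_pat := P1234 | P2143.

Definition suc (pi : perm_pat) (v : pt) : list pt :=
  nodup pt_eq_dec (match pi with P1234 => suc1234 v | P2143 => suc2143 v end).

Fixpoint paths (pi : perm_pat) (v : pt) (r : nat) : list (list pt) :=
  match r with
  | O => []
  | S O => [[v]]
  | S r' => flat_map (fun w => map (cons v) (paths pi w r')) (suc pi v)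
  end.

Definition px (v : pt) : Z := let '(x, _, _) := v in x.
Definition py (v : pt) : Z := let '(_, y, _) := v in y.
Definition pz (v : pt) : Z := let '(_, _, z) := v in z.

Definition recorded (pi : perm_pat) (u w : pt) : bool :=
  match pi with
  | P2143 => ((pz u =? pz w) && (py w =? py u + 1)) || (pz w <? pz u)
  | P1234 => py w =? py u + 1
  end.

Fixpoint rec_ends (pi : perm_pat) (u : pt) (P : list pt) : list Z :=
  match P with
  | [] => []
  | w :: P' => (if recorded pi u w then [px w] else []) ++ rec_ends pi w P'
  end.

Definition signature (pi : perm_pat) (P : list pt) : list Z :=
  match P with
  | [] => []
  | v :: P' => px v :: rec_ends pi v P'
  end.

Definition valid_start (v : pt) : bool :=
  let '(x, y, z) := v in (2 <=? x) && (x <=? y) && (1 <=? z).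

(* Coefficient of t^n in F^pi(k,q,gamma) = sum_{P in P^pi_{k,q,gamma}} t^{l(P)-m}:
   the number of paths P of length n + m starting at (gamma_1, gamma_1 + k, q)
   with signature gamma (m = length gamma). Since every such path has
   length >= m, this determines the power series completely. *)
Definition Fcoef (pi : perm_pat) (k q : Z) (gamma : list Z) (n : nat) : nat :=
  let g1 := hd 0 gamma in
  let v := (g1, g1 + k, q) in
  if valid_start v then
    length (filter (fun P => if list_eq_dec Z.eq_dec (signature pi P) gamma
                             then true else false)
                   (paths pi v (n + length gamma)))
  else 0%nat.

From Stdlib Require Import ZArith List Lia Bool.
Import ListNotations.
Open Scope Z_scope.

(* Both coefficients count paths by the part of the signature still to be read:
   [path_count pi r v R] is the number of paths with r further steps from v whose
   recorded endpoints read R, and it obeys a linear recursion over the successors of v.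
   From (x,y,z) the 1234 successors are the rows at all levels 1..z together with the
   column at level 1, while the 2143 successors are the row and the column at level z
   together with the rows at height x+1 of the lower levels.  For 1234, raising y by one
   adds exactly c_r(x,y+1,z+1) to c_{r+1}(x,y,z); summing this from y = x shows that the
   1234 counts also obey the 2143 recursion, so the two counts agree by induction on r. *)

Lemma list_sum_cons (n : nat) (l : list nat) : list_sum (n :: l) = (n + list_sum l)%nat.
Proof. reflexivity. Qed.

Lemma list_sum_map_add {A : Type} (f g : A -> nat) (l : list A) :
  list_sum (map (fun a => (f a + g a)%nat) l) = (list_sum (map f l) + list_sum (map g l))%nat.
Proof. induction l as [|a l IH]; [reflexivity|]. cbn [map]. rewrite !list_sum_cons, IH. lia. Qed.

Lemma list_sum_map_zero {A : Type} (f : A -> nat) (l : list A) :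
  (forall a, In a l -> f a = 0%nat) -> list_sum (map f l) = 0%nat.
Proof.
  intros Hf. induction l as [|a l IH]; [reflexivity|].
  cbn [map]. rewrite list_sum_cons, Hf, IH; [reflexivity| |now left].
  intros b Hb. apply Hf. now right.
Qed.

Lemma filter_flat_map {A B : Type} (p : B -> bool) (g : A -> list B) (l : list A) :
  filter p (flat_map g l) = flat_map (fun a => filter p (g a)) l.
Proof. induction l as [|a l IH]; cbn; [reflexivity|]. now rewrite filter_app, IH. Qed.

Lemma length_filter_false {A : Type} (p : A -> bool) (l : list A) :
  (forall a, In a l -> p a = false) -> length (filter p l) = 0%nat.
Proof. intros H. induction l as [|a l IH]; cbn in *; [reflexivity|]. rewrite H; auto. Qed.

Lemma list_sum_indicator (g : Z -> nat) (a : Z) (l : list Z) : NoDup l ->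
  list_sum (map (fun b => if Z.eq_dec b a then g b else 0%nat) l)
  = if in_dec Z.eq_dec a l then g a else 0%nat.
Proof.
  induction 1 as [|b l Hb _ IH]; [reflexivity|].
  cbn [map]. rewrite list_sum_cons, IH.
  destruct (Z.eq_dec b a) as [Hba|Hba], (in_dec Z.eq_dec a l),
    (in_dec Z.eq_dec a (b :: l)) as [Hin|Hin]; cbn in *; subst; tauto || lia.
Qed.

Lemma in_zrange lo hi b : In b (zrange lo hi) <-> lo <= b <= hi.
Proof.
  unfold zrange. rewrite in_map_iff. split.
  - intros [i [<- Hi]]. apply in_seq in Hi. lia.
  - intros Hb. exists (Z.to_nat (b - lo)). split; [lia|]. apply in_seq. lia.
Qed.

Lemma zrange_NoDup lo hi : NoDup (zrange lo hi).
Proof.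
  apply NoDup_map_NoDup_ForallPairs; [|apply seq_NoDup].
  intros i j _ _ Hij. lia.
Qed.

Lemma zrange_empty a : zrange (a + 1) a = [].
Proof. unfold zrange. now replace (a - (a + 1) + 1) with 0 by lia. Qed.

Lemma zrange_snoc lo hi : lo <= hi + 1 -> zrange lo (hi + 1) = zrange lo hi ++ [hi + 1].
Proof.
  intros H. unfold zrange.
  replace (Z.to_nat (hi + 1 - lo + 1)) with (S (Z.to_nat (hi - lo + 1))) by lia.
  rewrite seq_S, map_app. cbn. do 2 f_equal. lia.
Qed.

Definition mkpt (x y : Z) (z : nat) : pt := (x, y, Z.of_nat z).

Lemma in_row x y z w : In w (row x y z) -> exists a, w = (a, y + 1, z).
Proof. unfold row. rewrite in_map_iff. intros [a [<- _]]. eauto. Qed.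

Lemma in_col x y z w : In w (col x y z) -> exists b, w = (x, b, z) /\ x + 1 <= b <= y.
Proof. unfold col. rewrite in_map_iff. intros [b [<- Hb%in_zrange]]. eauto. Qed.

Lemma row_NoDup x y z : NoDup (row x y z).
Proof.
  apply NoDup_map_NoDup_ForallPairs; [|apply zrange_NoDup].
  intros a a' _ _ H. congruence.
Qed.

Lemma col_NoDup x y z : NoDup (col x y z).
Proof.
  apply NoDup_map_NoDup_ForallPairs; [|apply zrange_NoDup].
  intros b b' _ _ H. congruence.
Qed.

Lemma row_col_disjoint x y z w : In w (row x y z) -> ~ In w (col x y z).
Proof.
  intros Hr Hc. apply in_row in Hr as [a ->]. apply in_col in Hc as [b [Hw Hb]].
  injection Hw. lia.
Qed.

Lemma suc1234n_SS x y n :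
  suc1234n x y (S (S n)) = row x y (Z.of_nat (S (S n))) ++ suc1234n x y (S n).
Proof. reflexivity. Qed.

Lemma in_suc1234n x y n w : In w (suc1234n x y n) -> 1 <= pz w <= Z.of_nat n.
Proof.
  induction n as [|[|n] IH]; [easy|cbn [suc1234n]|rewrite suc1234n_SS]; rewrite in_app_iff.
  - intros [Hw|Hw]; [apply in_row in Hw as [a ->]|apply in_col in Hw as [b [-> _]]]; cbn; lia.
  - intros [Hw|Hw]; [apply in_row in Hw as [a ->]; cbn; lia|]. apply IH in Hw. lia.
Qed.

Lemma suc2143n_S x y n :
  suc2143n x y (S n) = row x y (Z.of_nat (S n)) ++ col x y (Z.of_nat (S n)) ++ suc2143n x x n.
Proof. reflexivity. Qed.

Lemma col_diag x z : col x x z = [].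
Proof. unfold col. now rewrite zrange_empty. Qed.

Lemma in_suc2143n x y n w : In w (suc2143n x y n) -> 1 <= pz w <= Z.of_nat n.
Proof.
  revert y. induction n as [|n IH]; intros y; cbn [suc2143n]; [easy|]. rewrite !in_app_iff.
  intros [Hw|[Hw|Hw]];
    [apply in_row in Hw as [a ->]|apply in_col in Hw as [b [-> _]]|apply IH in Hw];
    cbn in *; lia.
Qed.

Lemma suc1234n_NoDup x y n : NoDup (suc1234n x y n).
Proof.
  induction n as [|[|n] IH]; [constructor|cbn [suc1234n]|rewrite suc1234n_SS].
  - apply NoDup_app; [apply row_NoDup|apply col_NoDup|apply row_col_disjoint].
  - apply NoDup_app; [apply row_NoDup|exact IH|].
    intros w Hr Hs. apply in_row in Hr as [a ->]. apply in_suc1234n in Hs. cbn in Hs. lia.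
Qed.

Lemma suc2143n_NoDup x y n : NoDup (suc2143n x y n).
Proof.
  revert y. induction n as [|n IH]; intros y; cbn [suc2143n]; [constructor|].
  apply NoDup_app; [apply row_NoDup|apply NoDup_app; [apply col_NoDup|apply IH|]|].
  - intros w Hc Hs. apply in_col in Hc as [b [-> _]]. apply in_suc2143n in Hs. cbn in Hs. lia.
  - intros w Hr. rewrite in_app_iff. intros [Hc|Hs]; [exact (row_col_disjoint _ _ _ _ Hr Hc)|].
    apply in_row in Hr as [a ->]. apply in_suc2143n in Hs. cbn in Hs. lia.
Qed.

Lemma suc_1234_mkpt x y z : (1 <= z)%nat -> suc P1234 (mkpt x y z) = suc1234n x y z.
Proof.
  intros Hz. unfold suc, suc1234, mkpt.
  replace (Z.of_nat z <=? 0) with false by lia.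
  rewrite Nat2Z.id. apply nodup_fixed_point, suc1234n_NoDup.
Qed.

Lemma suc_2143_mkpt x y z : (1 <= z)%nat -> suc P2143 (mkpt x y z) = suc2143n x y z.
Proof.
  intros Hz. unfold suc, suc2143, mkpt.
  replace (Z.of_nat z <=? 0) with false by lia.
  rewrite Nat2Z.id. apply nodup_fixed_point, suc2143n_NoDup.
Qed.

Lemma recorded_2143_iff v w :
  recorded P2143 v w = true <-> (pz w = pz v /\ py w = py v + 1) \/ pz w < pz v.
Proof. cbn. rewrite orb_true_iff, andb_true_iff, !Z.eqb_eq, Z.ltb_lt. intuition. Qed.

Definition edge_count (f : pt -> list Z -> nat) (pi : perm_pat) (v : pt) (R : list Z)
    (w : pt) : nat :=
  if recorded pi v w then
    match R with
    | [] => 0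
    | a :: R' => if Z.eq_dec (px w) a then f w R' else 0
    end
  else f w R.

Fixpoint path_count (pi : perm_pat) (r : nat) (v : pt) (R : list Z) : nat :=
  match r with
  | O => match R with [] => 1 | _ :: _ => 0 end
  | S r' => list_sum (map (edge_count (path_count pi r') pi v R) (suc pi v))
  end.

Definition ends_with (pi : perm_pat) (v : pt) (R : list Z) (Q : list pt) : bool :=
  if list_eq_dec Z.eq_dec (rec_ends pi v Q) R then true else false.

Lemma ends_with_cons pi v w R Q :
  ends_with pi v R (w :: Q) =
  if recorded pi v w then
    match R with
    | [] => false
    | a :: R' => if Z.eq_dec (px w) a then ends_with pi w R' Q else false
    end
  else ends_with pi w R Q.
Proof.
  unfold ends_with. cbn [rec_ends]. destruct (recorded pi v w); cbn [app]; [|reflexivity].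
  destruct R as [|a R'];
    [|destruct (Z.eq_dec (px w) a), (list_eq_dec Z.eq_dec (rec_ends pi w Q) R')];
    destruct list_eq_dec; congruence.
Qed.

Lemma paths_hd pi v r P : In P (paths pi v r) -> P = v :: tl P.
Proof.
  destruct r as [|[|r]]; cbn [paths]; [easy|now intros [<-|[]]|].
  rewrite in_flat_map. intros [w [_ HP]]. apply in_map_iff in HP as [Q [<- _]]. reflexivity.
Qed.

Lemma paths_SS pi v r :
  paths pi v (S (S r)) = flat_map (fun w => map (cons v) (paths pi w (S r))) (suc pi v).
Proof. reflexivity. Qed.

Lemma path_count_spec pi r v R :
  length (filter (fun P => ends_with pi v R (tl P)) (paths pi v (S r))) = path_count pi r v R.
Proof.
  revert v R. induction r as [|r IH]; intros v R.
  - cbn. unfold ends_with. cbn. destruct R; reflexivity.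
  - rewrite paths_SS, filter_flat_map, length_flat_map. cbn [path_count]. f_equal.
    apply map_ext_in. intros w _. rewrite filter_map_swap, length_map. cbn [tl].
    unfold edge_count.
    destruct (recorded pi v w) eqn:Hrec;
      [destruct R as [|a R']; [|destruct (Z.eq_dec (px w) a)]|].
    + apply length_filter_false. intros Q HQ.
      now rewrite (paths_hd _ _ _ _ HQ), ends_with_cons, Hrec.
    + rewrite <- IH. f_equal. apply filter_ext_in. intros Q HQ.
      rewrite (paths_hd _ _ _ _ HQ), ends_with_cons, Hrec. now destruct Z.eq_dec.
    + apply length_filter_false. intros Q HQ.
      rewrite (paths_hd _ _ _ _ HQ), ends_with_cons, Hrec. now destruct Z.eq_dec.
    + rewrite <- IH. f_equal. apply filter_ext_in. intros Q HQ.
      now rewrite (paths_hd _ _ _ _ HQ), ends_with_cons, Hrec.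
Qed.

Lemma Fcoef_path_count pi k q g1 R n :
  Fcoef pi k q (g1 :: R) n =
  if valid_start (g1, g1 + k, q) then path_count pi (n + length R) (g1, g1 + k, q) R else 0%nat.
Proof.
  unfold Fcoef. cbn [hd length]. destruct (valid_start (g1, g1 + k, q)); [|reflexivity].
  rewrite Nat.add_succ_r, <- path_count_spec. f_equal. apply filter_ext_in. intros P HP.
  rewrite (paths_hd _ _ _ _ HP). unfold signature, ends_with. cbn [px tl].
  destruct (list_eq_dec Z.eq_dec (rec_ends pi (g1, g1 + k, q) (tl P)) R),
    list_eq_dec; congruence.
Qed.

(* A row is entered by recorded edges only, so of its points just the one whose
   x-coordinate is the next letter of R contributes. *)
Definition row_sum (f : pt -> list Z -> nat) (x y : Z) (z : nat) (R : list Z) : nat :=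
  match R with
  | [] => 0
  | a :: R' => if in_dec Z.eq_dec a (zrange 2 (x + 1)) then f (mkpt a (y + 1) z) R' else 0
  end.

Definition col_sum (f : pt -> list Z -> nat) (x y : Z) (z : nat) (R : list Z) : nat :=
  list_sum (map (fun b => f (mkpt x b z) R) (zrange (x + 1) y)).

Definition rows_sum (f : pt -> list Z -> nat) (x y : Z) (z : nat) (R : list Z) : nat :=
  list_sum (map (fun l => row_sum f x y l R) (seq 1 z)).

Lemma row_sum_ext f g x y z R :
  (forall a R', 2 <= a <= x + 1 -> f (mkpt a (y + 1) z) R' = g (mkpt a (y + 1) z) R') ->
  row_sum f x y z R = row_sum g x y z R.
Proof.
  intros Hfg. destruct R as [|a R']; cbn; [reflexivity|].
  destruct in_dec as [Ha|]; [apply Hfg, in_zrange, Ha|reflexivity].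
Qed.

Lemma col_sum_ext f g x y z R :
  (forall b, x + 1 <= b <= y -> f (mkpt x b z) R = g (mkpt x b z) R) ->
  col_sum f x y z R = col_sum g x y z R.
Proof.
  intros Hfg. unfold col_sum. f_equal. apply map_ext_in. intros b Hb%in_zrange. now apply Hfg.
Qed.

Lemma rows_sum_ext f g x y z R :
  (forall l a R', (1 <= l <= z)%nat -> 2 <= a <= x + 1 ->
     f (mkpt a (y + 1) l) R' = g (mkpt a (y + 1) l) R') ->
  rows_sum f x y z R = rows_sum g x y z R.
Proof.
  intros Hfg. unfold rows_sum. f_equal. apply map_ext_in. intros l Hl%in_seq.
  apply row_sum_ext. intros a R' Ha. apply Hfg; lia.
Qed.

Lemma col_sum_empty f x z R : col_sum f x x z R = 0%nat.
Proof. unfold col_sum. now rewrite zrange_empty. Qed.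

Lemma col_sum_succ f x y z R : x <= y ->
  col_sum f x (y + 1) z R = (col_sum f x y z R + f (mkpt x (y + 1) z) R)%nat.
Proof.
  intros Hxy. unfold col_sum. rewrite zrange_snoc, map_app, list_sum_app by lia.
  cbn. lia.
Qed.

Lemma rows_sum_succ f x y z R :
  rows_sum f x y (S z) R = (rows_sum f x y z R + row_sum f x y (S z) R)%nat.
Proof.
  unfold rows_sum. rewrite seq_S, map_app, list_sum_app. cbn. lia.
Qed.

Lemma rows_sum_one f x y R : rows_sum f x y 1 R = row_sum f x y 1 R.
Proof. unfold rows_sum. cbn. lia. Qed.

Lemma rows_sum_succ_bottom f x y z R :
  rows_sum f x y (S z) R
  = (row_sum f x y 1 R + list_sum (map (fun l => row_sum f x y (S l) R) (seq 1 z)))%nat.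
Proof.
  unfold rows_sum. cbn [seq map]. rewrite list_sum_cons, <- seq_shift, map_map. reflexivity.
Qed.

Lemma sum_edges_row f pi v x y z R :
  (forall w, In w (row x y (Z.of_nat z)) -> recorded pi v w = true) ->
  list_sum (map (edge_count f pi v R) (row x y (Z.of_nat z))) = row_sum f x y z R.
Proof.
  intros Hrec. destruct R as [|a R'].
  - apply list_sum_map_zero. intros w Hw. unfold edge_count. now rewrite Hrec.
  - unfold row. rewrite map_map.
    rewrite (map_ext_in _ (fun b => if Z.eq_dec b a then f (mkpt b (y + 1) z) R' else 0%nat)).
    + rewrite list_sum_indicator by apply zrange_NoDup. reflexivity.
    + intros b Hb. unfold edge_count. rewrite Hrec by exact (in_map _ _ _ Hb). reflexivity.
Qed.

Lemma sum_edges_col f pi v x y z R :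
  (forall w, In w (col x y (Z.of_nat z)) -> recorded pi v w = false) ->
  list_sum (map (edge_count f pi v R) (col x y (Z.of_nat z))) = col_sum f x y z R.
Proof.
  intros Hrec. unfold col, col_sum. rewrite map_map. f_equal. apply map_ext_in.
  intros b Hb. unfold edge_count. rewrite Hrec by exact (in_map _ _ _ Hb). reflexivity.
Qed.

Lemma sum_edges_suc1234n f v x y n R : py v = y -> (1 <= n)%nat ->
  list_sum (map (edge_count f P1234 v R) (suc1234n x y n))
  = (rows_sum f x y n R + col_sum f x y 1 R)%nat.
Proof.
  intros Hv Hn. induction n as [|[|n] IH]; [lia| |rewrite suc1234n_SS].
  - change (suc1234n x y 1) with (row x y (Z.of_nat 1) ++ col x y (Z.of_nat 1)).
    rewrite map_app, list_sum_app, sum_edges_row, sum_edges_col.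
    + unfold rows_sum. cbn. lia.
    + intros w [b [-> Hb]]%in_col. cbn. lia.
    + intros w [a ->]%in_row. cbn. lia.
  - rewrite map_app, list_sum_app, IH, (rows_sum_succ f x y (S n)) by lia.
    rewrite sum_edges_row; [lia|].
    intros w [a ->]%in_row. cbn. lia.
Qed.

Lemma path_count_1234_succ x y z R r : (1 <= z)%nat ->
  path_count P1234 (S r) (mkpt x y z) R
  = (rows_sum (path_count P1234 r) x y z R + col_sum (path_count P1234 r) x y 1 R)%nat.
Proof.
  intros Hz. cbn [path_count]. rewrite suc_1234_mkpt by exact Hz.
  now apply sum_edges_suc1234n.
Qed.

Lemma sum_edges_suc2143n_diag f v x n R : Z.of_nat n < pz v ->
  list_sum (map (edge_count f P2143 v R) (suc2143n x x n)) = rows_sum f x x n R.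
Proof.
  intros Hv. induction n as [|n IH]; [reflexivity|].
  rewrite suc2143n_S, col_diag, app_nil_l, map_app, list_sum_app, IH, rows_sum_succ by lia.
  rewrite sum_edges_row; [lia|].
  intros w [a ->]%in_row. apply recorded_2143_iff. cbn. lia.
Qed.

Lemma path_count_2143_succ x y z R r :
  path_count P2143 (S r) (mkpt x y (S z)) R
  = (row_sum (path_count P2143 r) x y (S z) R + col_sum (path_count P2143 r) x y (S z) R
     + rows_sum (path_count P2143 r) x x z R)%nat.
Proof.
  cbn [path_count]. rewrite suc_2143_mkpt, suc2143n_S, !map_app, !list_sum_app by lia.
  rewrite sum_edges_row, sum_edges_col, sum_edges_suc2143n_diag.
  - lia.
  - cbn. lia.
  - intros w [b [-> Hb]]%in_col. apply not_true_iff_false. rewrite recorded_2143_iff. cbn. lia.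
  - intros w [a ->]%in_row. apply recorded_2143_iff. cbn. lia.
Qed.

Lemma path_count_1234_succ_level x y z R r : (1 <= z)%nat ->
  path_count P1234 (S r) (mkpt x y (S z)) R
  = (row_sum (path_count P1234 r) x y (S z) R + path_count P1234 (S r) (mkpt x y z) R)%nat.
Proof.
  intros Hz. rewrite !path_count_1234_succ, rows_sum_succ by lia. lia.
Qed.

Lemma row_sum_split f g h x y z R :
  (forall a R', 2 <= a <= x + 1 ->
     f (mkpt a (y + 1 + 1) z) R'
     = (g (mkpt a (y + 1) z) R' + h (mkpt a (y + 1 + 1) (S z)) R')%nat) ->
  row_sum f x (y + 1) z R = (row_sum g x y z R + row_sum h x (y + 1) (S z) R)%nat.
Proof.
  intros Hfgh. destruct R as [|a R']; cbn; [reflexivity|].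
  destruct in_dec as [Ha|]; [apply Hfgh, in_zrange, Ha|reflexivity].
Qed.

(* Raising y moves every row up by one; by induction the excess is a count from the rows
   of (x, y+1) one level higher.  The column gains the point (x, y+1, 1), whose successors
   are the level-1 row and column of (x, y+1), so together the excess terms range over the
   successors of (x, y+1, z+1). *)
Lemma path_count_1234_succ_y r : forall x y z R, x <= y -> (1 <= z)%nat ->
  path_count P1234 (S r) (mkpt x (y + 1) z) R
  = (path_count P1234 (S r) (mkpt x y z) R + path_count P1234 r (mkpt x (y + 1) (S z)) R)%nat.
Proof.
  induction r as [|r IH]; intros x y z R Hxy Hz;
    rewrite !path_count_1234_succ, col_sum_succ by lia.
  (* With no step left, a count does not depend on the point. *)
  - assert (Hrows : rows_sum (path_count P1234 0) x (y + 1) z R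
                     = rows_sum (path_count P1234 0) x y z R) by reflexivity.
    assert (Hend : path_count P1234 0 (mkpt x (y + 1) 1) R
                   = path_count P1234 0 (mkpt x (y + 1) (S z)) R) by reflexivity.
    lia.
  - assert (Hrows : rows_sum (path_count P1234 (S r)) x (y + 1) z R
      = (rows_sum (path_count P1234 (S r)) x y z R
         + list_sum (map (fun l => row_sum (path_count P1234 r) x (y + 1) (S l) R)
                         (seq 1 z)))%nat).
    { unfold rows_sum. rewrite <- list_sum_map_add. f_equal. apply map_ext_in.
      intros l Hl%in_seq. apply row_sum_split. intros a R' Ha. apply IH; lia. }
    rewrite Hrows, (path_count_1234_succ x (y + 1) 1), rows_sum_one,
      (rows_sum_succ_bottom _ x (y + 1) z) by lia.
    lia.
Qed.

Lemma row_sum_1234_succ_y x y z R r : x <= y -> (1 <= z)%nat ->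
  row_sum (path_count P1234 (S r)) x (y + 1) z R
  = (row_sum (path_count P1234 (S r)) x y z R
     + row_sum (path_count P1234 r) x (y + 1) (S z) R)%nat.
Proof.
  intros Hxy Hz. apply row_sum_split. intros a R' Ha. apply path_count_1234_succ_y; lia.
Qed.

Lemma path_count_1234_rec_2143 x y z R r : x <= y ->
  path_count P1234 (S r) (mkpt x y (S z)) R
  = (row_sum (path_count P1234 r) x y (S z) R + col_sum (path_count P1234 r) x y (S z) R
     + rows_sum (path_count P1234 r) x x z R)%nat.
Proof.
  intros Hxy. replace y with (x + Z.of_nat (Z.to_nat (y - x))) by lia.
  induction (Z.to_nat (y - x)) as [|d IH].
  - rewrite Z.add_0_r, path_count_1234_succ, rows_sum_succ, !col_sum_empty by lia. lia.
  - rewrite Nat2Z.inj_succ, <- Z.add_1_r, Z.add_assoc.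
    rewrite path_count_1234_succ_y, IH, col_sum_succ by lia.
    destruct r as [|r].
    + set (c := x + Z.of_nat d).
      assert (Hrow : row_sum (path_count P1234 0) x c (S z) R
                     = row_sum (path_count P1234 0) x (c + 1) (S z) R) by reflexivity.
      assert (Hend : path_count P1234 0 (mkpt x (c + 1) (S (S z))) R
                     = path_count P1234 0 (mkpt x (c + 1) (S z)) R) by reflexivity.
      lia.
    + rewrite path_count_1234_succ_level, row_sum_1234_succ_y by lia. lia.
Qed.

Lemma path_count_1234_2143 r : forall x y z R, x <= y -> (1 <= z)%nat ->
  path_count P1234 r (mkpt x y z) R = path_count P2143 r (mkpt x y z) R.
Proof.
  induction r as [|r IH]; intros x y [|z] R Hxy Hz; try lia; [reflexivity|].
  rewrite path_count_1234_rec_2143, path_count_2143_succ by exact Hxy.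
  rewrite (row_sum_ext _ (path_count P2143 r)), (col_sum_ext _ (path_count P2143 r)),
    (rows_sum_ext _ (path_count P2143 r)); [reflexivity| ..]; intros; apply IH; lia.
Qed.

(* No hypothesis on k, q or gamma is needed: an invalid start makes both coefficients 0. *)
Theorem Fcoef_1234_2143 k q gamma n : Fcoef P1234 k q gamma n = Fcoef P2143 k q gamma n.
Proof.
  destruct gamma as [|g1 R]; [reflexivity|].
  rewrite !Fcoef_path_count. destruct (valid_start (g1, g1 + k, q)) eqn:Hstart; [|reflexivity].
  cbn in Hstart. rewrite !andb_true_iff, !Z.leb_le in Hstart.
  replace q with (Z.of_nat (Z.to_nat q)) by lia.
  apply path_count_1234_2143; lia.
Qed.

Theorem lemma3p6 (k q : Z) (gamma : list Z) :
  0 <= k -> 1 <= q -> (1 <= length gamma)%nat ->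
  2 <= nth 0 gamma 0 ->
  (forall i : nat, (i + 1 < length gamma)%nat ->
     2 <= nth (i + 1) gamma 0 <= nth i gamma 0 + 1) ->
  forall n : nat, Fcoef P1234 k q gamma n = Fcoef P2143 k q gamma n.
Proof. intros _ _ _ _ _ n. apply Fcoef_1234_2143. Qed.
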